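(* Let $\mathcal{M}$ be a separable metric space, $f:\mathcal{M}\to\mathcal{M}$ a continuous bijection with continuous inverse, $\mathcal{X}\subseteq\mathcal{M}$ forward invariant under $f$, $\mathcal{Z}$ a separable metric space, $g:\mathcal{Z}\to\mathcal{Z}$ a continuous bijection with continuous inverse, and $F:\mathcal{X}\to\mathcal{Z}$ continuous with $F\circ f=g\circ F$ on $\mathcal{X}$. For any $\xi\in\mathcal{X}$, if the trajectory through $\xi$ is backward precompact in $\mathcal{X}$, then $F(\xi)\in D^-_{\mathcal{Z}}(F(\alpha_{\mathcal{X}}(\xi)))$.
   Context: $\alpha_{\mathcal{X}}(\xi)$ is the set of $x\in\mathcal{X}$ such that $f^{-k_j}(\xi)\to x$ for some indices $k_j\to\infty$ ($f^{-k}$ the $k$-th iterate of $f^{-1}$); $\alpha_{\mathcal{Z}}(\zeta)$ is defined analogously with $g^{-1}$. $D^-_{\mathcal{Z}}(\Gamma)=\{\zeta\in\mathcal{Z}\mid\alpha_{\mathcal{Z}}(\zeta)=\Gamma\}$. The trajectory through $\xi$ is backward precompact in $\mathcal{X}$ if the closure in $\mathcal{X}$ of $\{f^{-k}(\xi)\mid k\in\mathbb{N}\}$ is compact. *)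

From HB Require Import structures.
From mathcomp Require Import all_boot all_order all_algebra.
From mathcomp Require Import all_classical all_reals all_analysis.
Set Implicit Arguments. Unset Strict Implicit. Unset Printing Implicit Defensive.
Import Order.TTheory GRing.Theory Num.Theory.
Local Open Scope classical_set_scope.

Definition separable (T : topologicalType) : Prop :=
  exists D : set T, countable D /\ dense D.

Definition homeo_with (T : topologicalType) (f finv : T -> T) : Prop :=
  [/\ continuous f, continuous finv, cancel f finv & cancel finv f].

(* alpha-limit set relative to a subset X (X = setT for the whole space):
   points x of X such that finv^k_j xi --> x for some k_j --> oo
   (k_j given by a strictly increasing sequence of indices). *)
Definition alpha_lim (T : topologicalType) (X : set T) (finv : T -> T) (xi : T)
  : set T :=
  [set x | X x /\ exists phi : nat -> nat, {homo phi : n m / (n < m)%N} /\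
      (fun j => iter (phi j) finv xi) @ \oo --> x].

Definition Dminus (T : topologicalType) (ginv : T -> T) (Gamma : set T) : set T :=
  [set z | alpha_lim setT ginv z = Gamma].

(* The backward trajectory through xi lies in X and its closure in X
   (i.e. closure in T intersected with X, the subspace closure) is compact. *)
Definition backward_precompact (T : topologicalType) (X : set T)
  (finv : T -> T) (xi : T) : Prop :=
  let O := [set iter k finv xi | k in setT] in
  O `<=` X /\ compact (closure O `&` X).

(* Along the backward orbit u_k = f^-k(xi), the semiconjugacy gives
   F(u_k) = g^-k(F xi), so alpha_Z(F xi) is the set of subsequential limits of
   F o u, while alpha_X(xi) is the set of subsequential limits of u lying in X.
   Continuity of F maps the latter into the former.  Conversely, if
   F(u_{k_j}) --> z, compactness of the closure of the orbit in X yields a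
   further subsequence u_{k_j_i} --> x in X (sequences suffice in a metric
   space), and then z = F x since limits are unique in Z. *)

From HB Require Import structures.
From mathcomp Require Import all_boot all_order all_algebra.
From mathcomp Require Import all_classical all_reals all_analysis.
Import Order.TTheory GRing.Theory Num.Theory.
Local Open Scope classical_set_scope.

Lemma cvg_increasing_nat (phi : nat -> nat) :
  {homo phi : n m / (n < m)%N} -> phi @ \oo --> \oo.
Proof.
move=> phi_incr; have phi_ge n : (n <= phi n)%N.
  by elim: n => // n IHn; exact: leq_ltn_trans IHn (phi_incr _ _ (ltnSn n)).
apply/cvgnyPge => N; near=> n; apply: leq_trans (phi_ge n); near: n.
exact: nbhs_infty_ge.
Unshelve. all: end_near. Qed.

Definition subseq_limits {T : topologicalType} (u : nat -> T) : set T :=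
  [set x | exists phi : nat -> nat,
     {homo phi : n m / (n < m)%N} /\ u \o phi @ \oo --> x].

Section subseq_limits_theory.
Context {T : topologicalType}.

Lemma subseq_limits_comp {u : nat -> T} {phi : nat -> nat} :
  {homo phi : n m / (n < m)%N} ->
  subseq_limits (u \o phi) `<=` subseq_limits u.
Proof.
move=> phi_incr x [psi [psi_incr upsi_x]]; exists (phi \o psi); split => //.
by move=> n m nm; apply/phi_incr/psi_incr.
Qed.

Lemma subseq_limits_cvg {u : nat -> T} {z : T} : hausdorff_space T ->
  u @ \oo --> z -> subseq_limits u `<=` [set z].
Proof.
move=> hT u_z x [phi [/cvg_increasing_nat phi_oo uphi_x]].
exact: (cvg_unique hT uphi_x (cvg_comp _ _ phi_oo u_z)).
Qed.

Lemma subseq_limits_within_continuous {U : topologicalType} {X : set T}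
    {F : T -> U} {u : nat -> T} :
  {within X, continuous F} -> (forall n, X (u n)) ->
  F @` (X `&` subseq_limits u) `<=` subseq_limits (F \o u).
Proof.
move=> /subspace_continuousP cF Xu _ [x [Xx [phi [phi_incr uphi_x]]] <-].
exists phi; split => //.
have uphi_Xx : u \o phi @ \oo --> within X (nbhs x).
  by move=> W /uphi_x; apply: (@filterS nat) => n /(_ (Xu (phi n))).
exact: cvg_comp _ _ uphi_Xx (cF x Xx).
Qed.

End subseq_limits_theory.

Section pseudometric_subseq_limits.
Context {R : realType} {T : pseudoMetricType R}.

Lemma cluster_subseq_limits (u : nat -> T) :
  cluster (u @ \oo) `<=` subseq_limits u.
Proof.
move=> x ux.
have /choice[c cP] : forall Nk : nat * nat,
    exists n, (Nk.1 <= n)%N /\ ball x (Nk.2.+1%:R^-1)%R (u n).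
  move=> [N k]; have [] := ux [set u n | n in [set n | (N <= n)%N]]
      (ball x (k.+1%:R^-1)%R).
  - by exists N => // n Nn; exists n.
  - by apply: nbhsx_ballx; rewrite invr_gt0 ltr0n.
  by move=> _ [[n Nn <-] xun]; exists n; split => //; exact: ball_sym.
pose fix psi k := if k is k'.+1 then c ((psi k').+1, k) else c (0, 0)%N.
have psi_next k :
    ((psi k).+1 <= psi k.+1)%N /\ ball x (k.+2%:R^-1)%R (u (psi k.+1)).
  exact: (cP ((psi k).+1, k.+1)).
have psi_ball k : ball x (k.+1%:R^-1)%R (u (psi k)).
  by case: k => [|k]; [case: (cP (0, 0)%N) | case: (psi_next k)].
exists psi; split.
  by apply: homo_ltn => [|k]; [exact: ltn_trans | case: (psi_next k)].
apply/cvg_ballP => e e0; near=> k; apply: le_ball (psi_ball k); apply/ltW.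
by near: k; exact: (near_infty_natSinv_lt (PosNum e0)).
Unshelve. all: end_near. Qed.

Lemma compact_subseq_limits {K : set T} {u : nat -> T} :
  compact K -> (forall n, K (u n)) -> K `&` subseq_limits u !=set0.
Proof.
move=> cK Ku; have uK : (u @ \oo) K by exists 0%N => // n _; exact: Ku.
have [x [Kx ux]] := cK (u @ \oo) _ uK.
by exists x; split => //; exact: cluster_subseq_limits.
Qed.

Lemma subseq_limits_image {U : topologicalType} {X : set T} {F : T -> U}
    {u : nat -> T} :
  hausdorff_space U -> {within X, continuous F} -> (forall n, X (u n)) ->
  compact (closure (range u) `&` X) ->
  subseq_limits (F \o u) = F @` (X `&` subseq_limits u).
Proof.
move=> hU cF Xu cK; apply/seteqP; split; last first.
  exact: subseq_limits_within_continuous.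
move=> z [phi [phi_incr Fuphi_z]].
have Kuphi n : (closure (range u) `&` X) (u (phi n)).
  by split; [apply: subset_closure; exists (phi n) | exact: Xu].
have [x [[_ Xx] uphi_x]] := compact_subseq_limits (u := u \o phi) cK Kuphi.
have Fx_z : [set z] (F x).
  apply: (subseq_limits_cvg hU Fuphi_z).
  apply: (subseq_limits_within_continuous cF (fun n => Xu (phi n))).
  by exists x.
by exists x => //; split => //; exact: subseq_limits_comp phi_incr _ uphi_x.
Qed.

End pseudometric_subseq_limits.

Section backward_orbit.
Context {M Z : Type} {f finv : M -> M} {g ginv : Z -> Z}.
Context {X : set M} {F : M -> Z}.
Hypotheses (finvK : cancel finv f) (gK : cancel g ginv).
Hypothesis F_semiconj : forall x, X x -> F (f x) = g (F x).

Lemma semiconj_inv (x : M) : X (finv x) -> F (finv x) = ginv (F x).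
Proof. by move=> /F_semiconj; rewrite finvK => ->; rewrite gK. Qed.

Lemma semiconj_iter_inv {xi : M} : (forall k, X (iter k finv xi)) ->
  forall k, F (iter k finv xi) = iter k ginv (F xi).
Proof.
by move=> Xorbit; elim=> //= k <-; exact: semiconj_inv (Xorbit k.+1).
Qed.

End backward_orbit.

Lemma alpha_limE (T : topologicalType) (X : set T) (finv : T -> T) (xi : T) :
  alpha_lim X finv xi = X `&` subseq_limits (fun k => iter k finv xi).
Proof. by []. Qed.

Theorem corollary27 (R : realType) (M Z : metricType R)
  (f finv : M -> M) (g ginv : Z -> Z) (X : set M) (F : M -> Z) (xi : M) :
  separable M -> separable Z ->
  homeo_with f finv -> homeo_with g ginv ->
  f @` X `<=` X ->
  {within X, continuous F} ->
  (forall x, X x -> F (f x) = g (F x)) ->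
  X xi ->
  backward_precompact X finv xi ->
  Dminus ginv (F @` alpha_lim X finv xi) (F xi).
Proof.
move=> _ _ [_ _ _ finvK] [_ _ gK _] _ cF F_semiconj _ [orbitX cK].
have Xorbit k : X (iter k finv xi) by apply: orbitX; exists k.
have F_orbit : F \o (fun k => iter k finv xi) = fun k => iter k ginv (F xi).
  apply/funext => k /=.
  exact: (semiconj_iter_inv finvK gK F_semiconj Xorbit k).
rewrite /Dminus /= !alpha_limE setTI -F_orbit.
exact: subseq_limits_image (@metric_hausdorff _ Z) cF Xorbit cK.
Qed.
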